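(* Let $C$ be a non-empty clique of $G$. Then the problem $\max\{f(\mathbf{x}):\mathbf{x}\in\Delta(C)\}$ has a unique local maximizer, which is therefore its unique global maximizer, and this maximizer is $\mathbf{x}(C)$.
   Context: Let $G=(\mathcal{V},\mathcal{E})$ be a simple undirected graph on vertex set $\mathcal{V}=\{1,\dots,n\}$ with adjacency matrix $\mathbf{A}=(a_{ij})$ ($a_{ij}=1$ if $(i,j)\in\mathcal{E}$, else $0$; $a_{ii}=0$). A clique is a subset $C\subseteq\mathcal{V}$ with $(i,j)\in\mathcal{E}$ for all distinct $i,j\in C$. Let $\Delta=\{\mathbf{x}\in\mathbb{R}^n:\mathbf{0}\le\mathbf{x}\le\mathbf{1},\ \mathbf{1}^{\mathsf T}\mathbf{x}=1\}$, $\mathrm{supp}(\mathbf{x})=\{i:x_i\neq0\}$, and for a clique $C$, $\Delta(C)=\{\mathbf{x}\in\Delta:\mathrm{supp}(\mathbf{x})\subseteq C\}$. For a non-empty $C$, the characteristic vector $\mathbf{x}(C)\in\Delta$ has $x(C)_i=1/|C|$ for $i\in C$ and $0$ otherwise. For $\mathbf{x}\in\Delta$, $\mathcal{P}(\mathbf{x})$ is the set of vectors in $\Delta$ obtained by permuting the coordinates of $\mathbf{x}$. Let $\Phi:X\to\mathbb{R}$ be twice continuously differentiable on an open set $X\supset\Delta$, satisfying for every $\mathbf{x}\in\Delta$: (C1) $\nabla^2\Phi(\mathbf{x})$ is positive semidefinite; (C2) $\|\nabla^2\Phi(\mathbf{x})\|_2<2$; (C3) $\Phi$ is constant on $\mathcal{P}(\mathbf{x})$.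 Define $f(\mathbf{x})=\mathbf{x}^{\mathsf T}\mathbf{A}\mathbf{x}+\Phi(\mathbf{x})$. A point $\mathbf{x}$ of a set $Y$ is a local maximizer of $\max\{f:Y\}$ if $f(\mathbf{x})\ge f(\tilde{\mathbf{x}})$ for all $\tilde{\mathbf{x}}\in Y$ in some neighborhood of $\mathbf{x}$. *)

From HB Require Import structures.
From mathcomp Require Import all_boot all_order all_algebra all_fingroup.
From mathcomp Require Import all_classical all_reals all_analysis.
Set Implicit Arguments. Unset Strict Implicit. Unset Printing Implicit Defensive.
Import Order.TTheory GRing.Theory Num.Theory.
Import numFieldNormedType.Exports.
Local Open Scope classical_set_scope.
Local Open Scope ring_scope.

Section Defs.
Variables (R : realType) (n : nat).
Notation vec := 'rV[R]_n.

Definition evec (i : 'I_n) : vec := delta_mx 0 i.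

Definition partial (i : 'I_n) (g : vec -> R) (x : vec) : R := derive g x (evec i).

Definition hessian (g : vec -> R) (x : vec) : 'M[R]_n :=
  \matrix_(i, j) partial j (partial i g) x.

Definition C2_on (X : set vec) (g : vec -> R) : Prop :=
  [/\ {within X, continuous g},
      (forall x i, X x -> derivable g x (evec i)),
      (forall i, {within X, continuous (partial i g)}),
      (forall x i j, X x -> derivable (partial i g) x (evec j)) &
      (forall i j, {within X, continuous (partial j (partial i g))})].

Definition enorm (v : vec) : R := Num.sqrt (\sum_i v 0 i ^+ 2).

Definition psd (H : 'M[R]_n) : Prop := forall v : vec, 0 <= (v *m H *m v^T) 0 0.

(* spectral (operator 2-)norm of H is < a:
   ||H||_2 = sup_{v <> 0} ||H v||_2 / ||v||_2 < a *)
Definition spec_norm_lt (H : 'M[R]_n) (a : R) : Prop :=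
  exists2 c, c < a & forall v : vec, enorm (v *m H^T) <= c * enorm v.

Definition simplex : set vec :=
  [set x | (forall i, 0 <= x 0 i <= 1) /\ \sum_i x 0 i = 1].

Definition simplex_on (C : {set 'I_n}) : set vec :=
  [set x | simplex x /\ forall i, x 0 i != 0 -> i \in C].

Definition charvec (C : {set 'I_n}) : vec :=
  \row_i (if i \in C then (#|C|%:R)^-1 else 0).

Definition permvec (s : 'S_n) (x : vec) : vec := \row_i x 0 (s i).

Definition simple_graph (e : rel 'I_n) : Prop :=
  symmetric e /\ irreflexive e.

Definition adjacency (e : rel 'I_n) : 'M[R]_n := \matrix_(i, j) (e i j)%:R.

Definition is_clique (e : rel 'I_n) (C : {set 'I_n}) : Prop :=
  forall i j, i \in C -> j \in C -> i != j -> e i j.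

Definition local_maximizer (g : vec -> R) (Y : set vec) (x : vec) : Prop :=
  Y x /\ \forall y \near x, Y y -> g y <= g x.

Definition global_maximizer (g : vec -> R) (Y : set vec) (x : vec) : Prop :=
  Y x /\ forall y, Y y -> g y <= g x.
End Defs.

From HB Require Import structures.
From mathcomp Require Import all_boot all_order all_algebra all_fingroup.
From mathcomp Require Import all_classical all_reals all_analysis.
From mathcomp Require Import ring lra.
Set Implicit Arguments. Unset Strict Implicit. Unset Printing Implicit Defensive.
Import Order.TTheory GRing.Theory Num.Theory.
Import numFieldNormedType.Exports.
Local Open Scope classical_set_scope.
Local Open Scope ring_scope.

(* On Delta(C) the clique gives x^T A x = (sum_i x_i)^2 - sum_i x_i^2 = 1 - |x|^2, so there
   f = 1 + F with F := Phi - |x|^2.  Along any segment of Delta the second derivative of F is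
   d^T (Hess Phi) d - 2|d|^2 < 0, because ||Hess Phi||_2 < 2; hence a local maximizer z of F
   on the convex set Delta(C) is strictly better than every other point of Delta(C).  Swapping
   two coordinates of C maps Delta(C) to itself and preserves F, so it must fix z: z is
   constant on C, i.e. z = x(C).  A maximizer exists by compactness, so x(C) is the unique
   local and the unique global maximizer. *)

Section RealFunctions.
Variable R : realType.

Lemma is_derive_increment_le (phi dphi : R -> R) (a e : R) :
  (forall s : R, `|s| <= `|a| -> is_derive s (1 : R) phi (dphi s) /\ `|dphi s| <= e) ->
  `|phi a - phi 0| <= `|a| * e.
Proof.
move=> H.
have mvt b1 b2 : b1 <= b2 -> (forall s, b1 <= s <= b2 -> `|s| <= `|a|) ->
    `|phi b2 - phi b1| <= (b2 - b1) * e.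
  move=> b12 inb.
  have dphi_in x : x \in `[b1, b2] -> is_derive x (1 : R) phi (dphi x).
    by rewrite in_itv => /inb /H [].
  have [xi xiI ->] := MVT_segment b12
    (fun x xI => dphi_in x (subset_itv_oo_cc xI))
    (derivable_within_continuous (fun x xI => (dphi_in x xI).(ex_derive))).
  rewrite normrM [`|b2 - b1|]ger0_norm ?subr_ge0 // mulrC ler_wpM2l ?subr_ge0 //.
  by move: xiI; rewrite in_itv => /inb /H [].
have [a0|a0] := leP 0 a.
  rewrite [`|a|]ger0_norm //; have := mvt 0 a a0; rewrite subr0; apply.
  by move=> s /andP[s0 sa]; rewrite !ger0_norm // (le_trans s0).
rewrite distrC [`|a|]ltr0_norm //; have := mvt a 0 (ltW a0); rewrite sub0r; apply.
move=> s /andP[a_s s0].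
by rewrite [`|a|]ltr0_norm // ler_norml opprK a_s (le_trans s0) // oppr_ge0 ltW.
Qed.

Lemma is_derive_quadratic (a0 a1 a2 t : R) :
  is_derive t (1 : R) (fun s : R => a0 + a1 * s + a2 * s ^+ 2) (a1 + 2 * a2 * t).
Proof.
have -> : (fun s : R => a0 + a1 * s + a2 * s ^+ 2) =
    cst a0 + a1 \*: id + a2 \*: ((@id R) ^+ 2) by apply/funext.
apply: is_derive_eq.
by rewrite /= add0r /GRing.scale /= !mulr1 expr1 mulrA (mulrC a2).
Qed.

Lemma concave_right_local_max_lt (h h' h'' : R -> R) :
  (forall t : R, 0 <= t <= 1 -> is_derive t (1 : R) h (h' t)) ->
  (forall t : R, 0 <= t <= 1 -> is_derive t (1 : R) h' (h'' t)) ->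
  (forall t : R, 0 <= t <= 1 -> h'' t < 0) ->
  (exists2 del : R, 0 < del & forall s, 0 < s < del -> h s <= h 0) ->
  h 1 < h 0.
Proof.
move=> dh dh' h''0 [del del0 hdel].
have mvt b : 0 < b -> b <= 1 -> exists2 c, 0 < c < b & h b - h 0 = h' c * b.
  move=> b0 b1.
  have dh_in x : x \in `[0, b] -> is_derive x (1 : R) h (h' x).
    by rewrite in_itv /= => /andP[x0 xb]; apply: dh; rewrite x0 (le_trans xb).
  have [c] := MVT b0 (fun x xI => dh_in x (subset_itv_oo_cc xI))
    (derivable_within_continuous (fun x xI => (dh_in x xI).(ex_derive))).
  by rewrite in_itv /= subr0 => cb; exists c.
have h'_dec : {in `[0, 1] &, {homo h' : x y /~ x < y}}.
  have in01 x : x \in `]0, 1[ -> 0 <= x <= 1 by move/subset_itv_oo_cc; rewrite in_itv /=.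
  apply: ltr0_derive1_lt_cc.
  - by move=> x /in01 /dh' [].
  - by move=> x /in01 x01; have dx := dh' x x01; rewrite derive1E derive_val h''0.
  - by apply: derivable_within_continuous => x; rewrite in_itv /= => /dh' [].
rewrite -subr_lt0.
have [c /andP[c0 c1] ->] := mvt 1 ltr01 (lexx 1); rewrite mulr1.
pose s := Num.min (del / 2) c.
have s0 : 0 < s by rewrite lt_min divr_gt0.
have sdel : s < del by rewrite gt_min ltr_pdivrMr // ltr_pMr // ltr1n.
have sc : s <= c by rewrite ge_min lexx orbT.
have [xi /andP[xi0 xis] hxi] := mvt s s0 (le_trans sc (ltW c1)).
have h'xi : h' xi <= 0.
  by rewrite -(pmulr_lle0 _ s0) -hxi subr_le0; apply: hdel; rewrite s0 sdel.
apply: lt_le_trans h'xi; apply: h'_dec (lt_le_trans xis sc); rewrite in_itv /=.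
- by rewrite (ltW c0) (ltW c1).
- by rewrite (ltW xi0) (le_trans (ltW xis) (le_trans sc (ltW c1))).
Qed.

End RealFunctions.

Section QuadraticForms.
Variables (R : realType) (n : nat).
Implicit Types (z d : 'rV[R]_n).

Definition sqnorm d : R := \sum_i d 0 i ^+ 2.

Lemma sqnorm_ge0 d : 0 <= sqnorm d.
Proof. by apply: sumr_ge0 => i _; exact: sqr_ge0. Qed.

Lemma sqnorm_gt0 d : d != 0 -> 0 < sqnorm d.
Proof.
move=> d0; have [i di] : exists i, d 0 i != 0.
  apply/existsP; apply: contraR d0 => /existsPn dE.
  by apply/eqP/rowP => i; rewrite mxE; move/negPn/eqP: (dE i).
rewrite /sqnorm (bigD1 i) //= ltr_pwDl ?sumr_ge0 // => [|j _]; last exact: sqr_ge0.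
by rewrite lt_def sqrf_eq0 di sqr_ge0.
Qed.

Lemma sqnorm_line z d (t : R) :
  sqnorm (z + t *: d) = sqnorm z + 2 * (\sum_i z 0 i * d 0 i) * t + sqnorm d * t ^+ 2.
Proof.
rewrite /sqnorm mulr_sumr !mulr_suml -!big_split /=.
by apply: eq_bigr => i _; rewrite !mxE; ring.
Qed.

Lemma quad_formE (H : 'M[R]_n) d :
  (d *m H *m d^T) 0 0 = \sum_i \sum_j d 0 i * H i j * d 0 j.
Proof.
rewrite mxE; under eq_bigr do rewrite !mxE mulr_suml.
by rewrite exchange_big /=; apply: eq_bigr => i _; apply: eq_bigr => j _.
Qed.

Lemma quad_form_lt_spec_norm (H : 'M[R]_n) d (a : R) :
  d != 0 -> spec_norm_lt H a -> (d *m H *m d^T) 0 0 < a * sqnorm d.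
Proof.
move=> d0 [c ca Hc].
set w := d *m H^T; set A := sqnorm d; set B := sqnorm w.
have A0 : 0 < A := sqnorm_gt0 d0.
have hc : Num.sqrt B <= c * Num.sqrt A := Hc d.
have sA : 0 < Num.sqrt A by rewrite sqrtr_gt0.
have c0 : 0 <= c.
  by rewrite -(pmulr_lge0 _ sA); apply: le_trans hc; exact: sqrtr_ge0.
have a0 : 0 < a := le_lt_trans c0 ca.
have BA : B <= c ^+ 2 * A.
  move: hc; rewrite -ler_sqr ?nnegrE ?mulr_ge0 ?sqrtr_ge0 //.
  by rewrite exprMn !sqr_sqrtr // ?sqnorm_ge0 // ltW.
have cA : c ^+ 2 * A < a ^+ 2 * A by rewrite ltr_pM2r // !expr2 ltr_pM.
set Q := \sum_i d 0 i * w 0 i.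
have QE : (d *m H *m d^T) 0 0 = Q.
  rewrite quad_formE; apply: eq_bigr => i _; rewrite !mxE mulr_sumr.
  by apply: eq_bigr => j _; rewrite !mxE; ring.
(* Expand 0 <= |a d - w|^2 and use |w|^2 <= c^2 |d|^2 < a^2 |d|^2. *)
have : 0 <= \sum_i (a * d 0 i - w 0 i) ^+ 2 by apply: sumr_ge0 => i _; exact: sqr_ge0.
have -> : \sum_i (a * d 0 i - w 0 i) ^+ 2 = a ^+ 2 * A - 2 * a * Q + B.
  rewrite /A /B /Q /sqnorm !mulr_sumr -sumrB -big_split /=.
  by apply: eq_bigr => i _; ring.
rewrite QE -(ltr_pM2l a0); lra.
Qed.

Lemma coord_sum_continuous (F : R -> R) :
  continuous F -> continuous (fun x : 'rV[R]_n => \sum_i F (x 0 i)).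
Proof.
move=> cF; apply: continuous_big => [|i _]; first exact: add_continuous.
by move=> x; apply: continuous_comp (cF _); exact: coord_continuous.
Qed.

Lemma sqnorm_continuous : continuous (sqnorm : 'rV[R]_n -> R).
Proof.
apply: (coord_sum_continuous (F := fun r => r ^+ 2)) => r.
exact: exprn_continuous.
Qed.

End QuadraticForms.

Section DirectionalDerivatives.
Variables (R : realType) (n : nat).
Implicit Types (g : 'rV[R]_n -> R) (p q v y d : 'rV[R]_n).

Lemma line_quotientE g p d t :
  (fun h : R => h^-1 *: (((fun s : R => g (p + s *: d)) \o shift t) (h *: 1)
     - g (p + t *: d))) =
  (fun h : R => h^-1 *: (g (h *: d + (p + t *: d)) - g (p + t *: d))).
Proof.
apply/funext => h /=; congr (_ *: (g _ - _)).
by rewrite [h *: 1]mulr1 scalerDl addrCA addrC.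
Qed.

Lemma is_derive_along g p d t :
  derivable g (p + t *: d) d ->
  is_derive t (1 : R) (fun s : R => g (p + s *: d)) ('D_d g (p + t *: d)).
Proof. by move=> dg; apply: DeriveDef; rewrite /derivable /derive line_quotientE. Qed.

Lemma increment_along_le g y v (a c e : R) :
  (forall s : R, `|s| <= `|a| ->
     derivable g (y + s *: v) v /\ `|'D_v g (y + s *: v) - c| <= e) ->
  `|g (y + a *: v) - g y - a * c| <= `|a| * e.
Proof.
move=> H.
pose phi := (fun s : R => g (y + s *: v)) - c \*: id.
have phiE s : phi s = g (y + s *: v) - c * s by [].
have -> : g (y + a *: v) - g y - a * c = phi a - phi 0.
  by rewrite !phiE scale0r addr0 mulr0 subr0 mulrC addrAC.
apply: (@is_derive_increment_le _ phi (fun s => 'D_v g (y + s *: v) - c *: 1)).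
move=> s /H [dg bound]; split; last by rewrite [c *: 1]mulr1.
exact/is_deriveB/is_derive_along.
Qed.

Definition row_prefix d (k : nat) : 'rV[R]_n :=
  \row_i (if (i < k)%N then d 0 i else 0).

Lemma row_prefix0 d : row_prefix d 0 = 0.
Proof. by apply/rowP => i; rewrite !mxE. Qed.

Lemma row_prefix_full d : row_prefix d n = d.
Proof. by apply/rowP => i; rewrite !mxE ltn_ord. Qed.

Lemma row_prefixS d (i : 'I_n) :
  row_prefix d i.+1 = row_prefix d i + d 0 i *: evec R i.
Proof.
apply/rowP => j; rewrite /evec !mxE ltnS eqxx /= -(inj_eq val_inj) /=.
by case: (ltngtP j i) => [_|_|/val_inj ->]; rewrite ?mulr0 ?addr0 ?add0r ?mulr1.
Qed.

(* Walk from q to q + v one coordinate at a time, along q + row_prefix v k, and apply the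
   one-dimensional mean-value estimate to each step. *)
Lemma partials_increment_le g q v (r e : R) :
  2 * \sum_i `|v 0 i| < r ->
  (forall y, ball q r y -> forall i,
     derivable g y (evec R i) /\ `|partial i g y - partial i g q| <= e) ->
  `|g (q + v) - g q - \sum_i v 0 i * partial i g q| <= (\sum_i `|v 0 i|) * e.
Proof.
set D := \sum_i `|v 0 i| => vr H.
pose y k := q + row_prefix v k.
have D0 : 0 <= D by apply: sumr_ge0.
have coord_le j : `|v 0 j| <= D by rewrite /D (bigD1 j) //= lerDl sumr_ge0.
have near_q k i s : `|s| <= `|v 0 i| -> ball q r (y k + s *: evec R i).
  move=> si; split=> [|i0 j]; first by apply: le_lt_trans vr; rewrite mulr_ge0.
  rewrite ord1 /y /evec !mxE /ball /= -addrA opprD addrA subrr sub0r normrN.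
  apply: le_lt_trans (ler_normD _ _) _; apply: le_lt_trans vr.
  rewrite mulr_natl mulr2n; apply: lerD; first by case: ifP; rewrite ?normr0.
  rewrite normrM; case: (j == i); rewrite /= ?normr0 ?mulr0 // normr1 mulr1.
  exact: le_trans si _.
have step (i : 'I_n) :
    `|g (y i.+1) - g (y i) - v 0 i * partial i g q| <= `|v 0 i| * e.
  rewrite /y row_prefixS addrA; apply: increment_along_le => s si.
  exact: H _ (near_q i i s si) i.
have -> : g (q + v) - g q = g (y n) - g (y 0).
  by rewrite /y row_prefix_full row_prefix0 addr0.
rewrite -(telescope_sumr (fun k => g (y k)) (leq0n n)) big_mkord -sumrB mulr_suml.
by apply: le_trans (ler_norm_sum _ _ _) _; apply: ler_sum => i _; exact: step.
Qed.

Lemma ball_partials_close (X : set 'rV[R]_n) g q (e : R) :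
  open X -> X q -> (forall x i, X x -> derivable g x (evec R i)) ->
  (forall i, {for q, continuous (partial i g)}) -> 0 < e ->
  exists2 r : R, 0 < r & forall y, ball q r y -> forall i,
    derivable g y (evec R i) /\ `|partial i g y - partial i g q| <= e.
Proof.
move=> oX Xq dg cq e0.
have : \forall y \near q, X y /\ forall i, `|partial i g y - partial i g q| <= e.
  near=> y; split; first by near: y; apply: open_nbhs_nbhs.
  near: y; apply: filter_forall => i.
  have /cvgrPdist_le /(_ e e0) := cq i; apply: filterS => y.
  by rewrite distrC.
move=> /nbhs_ballP [r r0 Hr]; exists r => // y /Hr [Xy B] i.
by split; [exact: dg | exact: B].
Unshelve. all: by end_near.
Qed.

Lemma cvg_difference_quotient_partials (X : set 'rV[R]_n) g q d :
  open X -> X q -> (forall x i, X x -> derivable g x (evec R i)) ->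
  (forall i, {for q, continuous (partial i g)}) ->
  (fun h : R => h^-1 *: (g (h *: d + q) - g q)) @ 0^' --> \sum_i d 0 i * partial i g q.
Proof.
move=> oX Xq dg cq; apply/cvgrPdist_le => e e0.
pose D := \sum_i `|d 0 i|.
have D0 : 0 <= D by apply: sumr_ge0.
pose e' := e / (D + 1).
have e'0 : 0 < e' by rewrite divr_gt0 // ltr_wpDl.
have [r r0 Hr] := ball_partials_close oX Xq dg cq e'0.
near=> h.
have h0 : h != 0 by near: h; exact: nbhs_dnbhs_neq.
have hr : `|h| * (2 * D + 1) < r.
  rewrite -ltr_pdivlMr ?ltr_wpDl ?mulr_ge0 //; near: h; apply: dnbhs0_lt.
  by rewrite divr_gt0 // ltr_wpDl ?mulr_ge0.
have hdE : \sum_i `|(h *: d) 0 i| = `|h| * D.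
  by rewrite mulr_sumr; apply: eq_bigr => i _; rewrite mxE normrM.
have := @partials_increment_le g q (h *: d) r e'.
rewrite hdE => /(_ _ Hr) bound.
have -> : \sum_i d 0 i * partial i g q - h^-1 *: (g (h *: d + q) - g q) =
    - (h^-1 * (g (q + h *: d) - g q - \sum_i (h *: d) 0 i * partial i g q)).
  have -> : \sum_i (h *: d) 0 i * partial i g q = h * \sum_i d 0 i * partial i g q.
    by rewrite mulr_sumr; apply: eq_bigr => i _; rewrite mxE mulrA.
  by rewrite [h *: d + q]addrC -[h^-1 *: _]/(h^-1 * _); field.
rewrite normrN normrM normfV; apply: le_trans (ler_wpM2l _ (bound _)) _.
- by rewrite invr_ge0.
- by apply: le_lt_trans hr; rewrite mulrCA ler_wpM2l // lerDl.
rewrite -mulrA mulKf ?normr_eq0 // /e' mulrA ler_pdivrMr ?ltr_wpDl //.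
by rewrite mulrDr mulr1 mulrC lerDl ltW.
Unshelve. all: by end_near.
Qed.

Lemma is_derive_line_partials (X : set 'rV[R]_n) g p d t :
  open X -> X (p + t *: d) -> (forall x i, X x -> derivable g x (evec R i)) ->
  (forall i, {within X, continuous (partial i g)}) ->
  is_derive t (1 : R) (fun s : R => g (p + s *: d))
    (\sum_i d 0 i * partial i g (p + t *: d)).
Proof.
move=> oX Xp dg cg.
have cp i : {for p + t *: d, continuous (partial i g)}.
  by have := cg i; rewrite continuous_open_subspace // => /(_ _ (mem_set Xp)).
have cv := cvg_difference_quotient_partials (d := d) oX Xp dg cp.
apply: DeriveDef; rewrite /derivable /derive line_quotientE; last exact: cvg_lim cv.
by apply/cvg_ex; eexists; exact: cv.
Qed.

Lemma is_derive2_line_hessian (X : set 'rV[R]_n) g p d t :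
  open X -> C2_on X g -> X (p + t *: d) ->
  is_derive t (1 : R) (fun s : R => \sum_i d 0 i * partial i g (p + s *: d))
    ((d *m hessian g (p + t *: d) *m d^T) 0 0).
Proof.
move=> oX [_ _ _ ddg cddg] Xp.
have -> : (fun s : R => \sum_i d 0 i * partial i g (p + s *: d)) =
    \sum_i d 0 i \*: (fun s : R => partial i g (p + s *: d)).
  by apply/funext => s; rewrite fct_sumE.
apply: is_derive_eq.
  apply: is_derive_sum => i; apply: is_deriveZ.
  exact: is_derive_line_partials oX Xp (ddg ^~ i) (cddg i).
rewrite quad_formE; apply: eq_bigr => i _; rewrite scaler_sumr.
by apply: eq_bigr => j _; rewrite mxE -[LHS]/(_ * _); ring.
Qed.

End DirectionalDerivatives.

Section ReducedObjective.
Variables (R : realType) (n : nat) (X : set 'rV[R]_n) (Phi : 'rV[R]_n -> R).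
Hypotheses (oX : open X) (Phi_C2 : C2_on X Phi).

Definition reduced_objective (x : 'rV[R]_n) : R := Phi x - sqnorm x.
Local Notation F := reduced_objective.

Lemma reduced_objective_segment_lt z d :
  d != 0 ->
  (forall t : R, 0 <= t <= 1 ->
     X (z + t *: d) /\ spec_norm_lt (hessian Phi (z + t *: d)) 2) ->
  (exists2 del : R, 0 < del & forall s, 0 < s < del -> F (z + s *: d) <= F z) ->
  F (z + d) < F z.
Proof.
move=> d0 seg [del del0 local].
have [_ dPhi cPhi ddPhi cddPhi] := Phi_C2.
pose a1 := \sum_i z 0 i * d 0 i.
pose h t := F (z + t *: d).
have -> : F (z + d) = h 1 by rewrite /h scale1r.
have -> : F z = h 0 by rewrite /h scale0r addr0.
apply: (@concave_right_local_max_lt _ h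
  (fun t => \sum_i d 0 i * partial i Phi (z + t *: d) - (2 * a1 + 2 * sqnorm d * t))
  (fun t => (d *m hessian Phi (z + t *: d) *m d^T) 0 0 - 2 * sqnorm d)).
- move=> t /seg [Xt _].
  have -> : h = (fun s => Phi (z + s *: d)) -
                (fun s => sqnorm z + 2 * a1 * s + sqnorm d * s ^+ 2).
    by apply/funext => s; rewrite /h /F sqnorm_line.
  apply: is_deriveB; last exact: is_derive_quadratic.
  exact: is_derive_line_partials oX Xt dPhi cPhi.
- move=> t /seg [Xt _].
  have -> : (fun t => \sum_i d 0 i * partial i Phi (z + t *: d) - (2 * a1 + 2 * sqnorm d * t)) =
      (fun s => \sum_i d 0 i * partial i Phi (z + s *: d)) -
      (fun s => 2 * a1 + 2 * sqnorm d * s + 0 * s ^+ 2).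
    by apply/funext => s; congr (_ - _); rewrite mul0r addr0.
  apply: is_derive_eq; first apply: is_deriveB (is_derive_quadratic _ _ _ _).
    exact: is_derive2_line_hessian oX Phi_C2 Xt.
  by rewrite mulr0 mul0r addr0.
- by move=> t /seg [_ Ht]; rewrite subr_lt0; exact: quad_form_lt_spec_norm.
- by exists del => // s /local; rewrite /h scale0r addr0.
Qed.

End ReducedObjective.

Section CliqueSimplex.
Variables (R : realType) (n : nat) (C : {set 'I_n}).
Implicit Types (x z w : 'rV[R]_n).

Lemma simplex_on_simplex : simplex_on (R:=R) C `<=` simplex (n:=n).
Proof. by move=> x []. Qed.

Lemma adjacency_quad_clique (e : rel 'I_n) x :
  simple_graph e -> is_clique e C -> simplex_on C x ->
  (x *m adjacency R e *m x^T) 0 0 = 1 - sqnorm x.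
Proof.
move=> [_ irr] cl [[_ s1] supp].
have term i j : x 0 i * adjacency R e i j * x 0 j =
    x 0 i * x 0 j - (if i == j then x 0 i ^+ 2 else 0).
  rewrite mxE; have [<-|ij] := eqVneq i j; first by rewrite irr mulr0 mul0r expr2 subrr.
  have [xi0|/supp iC] := eqVneq (x 0 i) 0; first by rewrite xi0 !mul0r subr0.
  have [xj0|/supp jC] := eqVneq (x 0 j) 0; first by rewrite xj0 !mulr0 subr0.
  by rewrite cl // mulr1 subr0.
rewrite quad_formE (eq_bigr (fun i => x 0 i - x 0 i ^+ 2)) => [|i _].
  by rewrite sumrB s1.
under eq_bigr do rewrite term.
by rewrite sumrB -mulr_sumr s1 mulr1 -big_mkcond /= (big_pred1 i) // => j /=; rewrite eq_sym.
Qed.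

Lemma simplex_on_segment z w (t : R) :
  simplex_on C z -> simplex_on C w -> 0 <= t <= 1 -> simplex_on C (z + t *: (w - z)).
Proof.
move=> [[zb zs] zC] [[wb ws] wC] /andP[t0 t1].
have E i : (z + t *: (w - z)) 0 i = (1 - t) * z 0 i + t * w 0 i by rewrite !mxE; ring.
split; [split|].
- move=> i; rewrite E; have /andP[z0 z1] := zb i; have /andP[w0 w1] := wb i.
  apply/andP; split; first by rewrite addr_ge0 // mulr_ge0 // subr_ge0.
  have : (1 - t) * z 0 i + t * w 0 i <= (1 - t) * 1 + t * 1.
    by apply: lerD; apply: ler_wpM2l; rewrite ?subr_ge0.
  by rewrite !mulr1 subrK.
- under eq_bigr do rewrite E.
  by rewrite big_split /= -!mulr_sumr zs ws !mulr1 subrK.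
- move=> i; rewrite E => /eqP zw.
  have [zi|] := eqVneq (z 0 i) 0; last exact: zC.
  have [wi|] := eqVneq (w 0 i) 0; last exact: wC.
  by exfalso; apply: zw; rewrite zi wi !mulr0 addr0.
Qed.

Lemma simplex_on_closed : closed (simplex_on (R:=R) C).
Proof.
have -> : simplex_on (R:=R) C =
   (\bigcap_i ((fun x : 'rV[R]_n => x 0 i) @^-1` `[0, 1]%classic)) `&`
   ((fun x : 'rV[R]_n => \sum_i x 0 i) @^-1` [set 1]) `&`
   (\bigcap_(i in [set i | i \notin C]) ((fun x : 'rV[R]_n => x 0 i) @^-1` [set 0])).
  apply/seteqP; split => x /=.
    move=> [[xb xs] xC]; split; [split|] => //.
      by move=> i _ /=; rewrite in_itv /=; exact: xb.
    move=> i /= iC; apply/eqP; apply: contraNT iC; exact: xC.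
  move=> [[xb xs] xC]; split; [split|] => //.
    by move=> i; have := xb i I; rewrite /= in_itv.
  by move=> i xi; apply: contraNT xi => iC; apply/eqP; exact: xC.
have coord_cont i : continuous (fun x : 'rV[R]_n => x 0 i) by move=> x; exact: coord_continuous.
apply: closedI; first apply: closedI.
- apply: closed_bigI => i _; apply: preimage_closed; last exact: itv_closed.
  by move=> x _; exact: coord_cont.
- apply: preimage_closed; last exact: closed_eq.
  by move=> x _; apply: (coord_sum_continuous (F := id)) => r; exact: cvg_id.
- apply: closed_bigI => i _; apply: preimage_closed; last exact: closed_eq.
  by move=> x _; exact: coord_cont.
Qed.

Lemma simplex_on_compact : compact (simplex_on (R:=R) C).
Proof.
apply: (subclosed_compact simplex_on_closed
  (rV_compact (fun=> @segment_compact R 0 1))).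
by move=> x [[xb _] _] i /=; rewrite in_itv /=; exact: xb.
Qed.

Lemma charvec_simplex_on : (0 < #|C|)%N -> simplex_on C (charvec R C).
Proof.
move=> C0; have N0 : 0 < #|C|%:R :> R by rewrite ltr0n.
split; [split|].
- move=> i; rewrite mxE; case: ifP => _; last by rewrite lexx ler01.
  by rewrite invr_ge0 ltW //= invf_le1 // ler1n.
- under eq_bigr do rewrite mxE.
  by rewrite -big_mkcond /= sumr_const -[_ *+ _]mulr_natr; apply: mulVf; rewrite lt0r_neq0.
- by move=> i; rewrite mxE; case: ifP => // _; rewrite eqxx.
Qed.

Lemma sum_permvec (F : R -> R) (s : 'S_n) x :
  \sum_i F (permvec s x 0 i) = \sum_i F (x 0 i).
Proof.
by rewrite [RHS](reindex_inj (@perm_inj _ s)); apply: eq_bigr => i _; rewrite mxE.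
Qed.

Lemma simplex_on_permvec (s : 'S_n) z :
  (forall k, s k \in C -> k \in C) -> simplex_on C z -> simplex_on C (permvec s z).
Proof.
move=> sC [[zb zs] zC]; split; [split|].
- by move=> k; rewrite mxE; exact: zb.
- by rewrite (sum_permvec id).
- by move=> k; rewrite mxE => /zC /sC.
Qed.

Lemma simplex_on_eq_charvec z :
  simplex_on C z -> {in C &, forall i j, z 0 i = z 0 j} -> z = charvec R C.
Proof.
move=> [[_ zs] zC] zsym.
have out k : k \notin C -> z 0 k = 0 by move=> kC; apply/eqP; apply: contraNT kC; exact: zC.
have sC : \sum_(k in C) z 0 k = 1.
  by rewrite -zs [RHS](bigID (mem C)) /= [X in _ + X]big1 ?addr0 // => k /out.
apply/rowP => k; rewrite mxE; case: ifP => kC; last exact/out/negbT.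
have N0 : #|C|%:R != 0 :> R.
  by rewrite pnatr_eq0 -lt0n card_gt0; apply/set0Pn; exists k.
apply: (mulfI N0); rewrite mulfV // -[RHS]sC (eq_bigr (fun=> z 0 k)) => [|j jC].
  by rewrite sumr_const mulr_natl.
exact: zsym.
Qed.

End CliqueSimplex.

Lemma global_maximizer_local (R : realType) (n : nat) (g : 'rV[R]_n -> R)
    (Y : set 'rV[R]_n) x :
  global_maximizer g Y x -> local_maximizer g Y x.
Proof.
by move=> [Yx gx]; split => //; near=> y; apply: gx.
Unshelve. all: by end_near.
Qed.

Section CliqueMaximizers.
Variables (R : realType) (n : nat) (e : rel 'I_n) (C : {set 'I_n}).
Variables (X : set 'rV[R]_n) (Phi : 'rV[R]_n -> R).
Hypotheses (e_simple : simple_graph e) (C_clique : is_clique e C).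
Hypotheses (oX : open X) (simplex_X : simplex (n:=n) `<=` X) (Phi_C2 : C2_on X Phi).
Hypothesis Phi_spec : forall x, simplex x -> spec_norm_lt (hessian Phi x) 2.
Hypothesis Phi_perm : forall x, simplex x -> forall s : 'S_n, Phi (permvec s x) = Phi x.

Local Notation f := (fun x : 'rV[R]_n => (x *m adjacency R e *m x^T) 0 0 + Phi x).
Local Notation F := (reduced_objective Phi).

Lemma objective_simplex_on x : simplex_on C x -> f x = 1 + F x.
Proof.
move=> Cx /=; rewrite (adjacency_quad_clique e_simple C_clique Cx).
by rewrite /reduced_objective addrAC -addrA.
Qed.

Lemma local_maximizer_reduced_lt z w :
  local_maximizer f (simplex_on C) z -> simplex_on C w -> w != z -> F w < F z.
Proof.
move=> [Cz z_max] Cw wz.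
have seg t : 0 <= t <= 1 -> simplex_on C (z + t *: (w - z)) := simplex_on_segment Cz Cw.
have -> : w = z + (w - z) by rewrite addrC subrK.
apply: (reduced_objective_segment_lt (z := z) (d := w - z) oX Phi_C2).
- by rewrite subr_eq0.
- by move=> t /seg /simplex_on_simplex Ct; split; [exact: simplex_X | exact: Phi_spec].
have cv : (cst z + (fun s : R => s *: (w - z))) @ (0 : R) --> z + 0 *: (w - z).
  by apply: cvgD; [exact: cvg_cst | exact: scalel_continuous].
rewrite scale0r addr0 in cv.
have /nbhs_ballP [r /= r0 near_max] := cv _ z_max.
exists (Num.min r 1); first by rewrite lt_min r0 ltr01.
move=> s /andP[s0]; rewrite lt_min => /andP[sr s1].
have Cs : simplex_on C (z + s *: (w - z)) by apply: seg; rewrite (ltW s0) (ltW s1).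
have : ball (0 : R) r s by rewrite /ball /= sub0r normrN gtr0_norm.
by move=> /near_max /(_ Cs); rewrite !objective_simplex_on // lerD2l.
Qed.

Lemma local_maximizer_charvec z : local_maximizer f (simplex_on C) z -> z = charvec R C.
Proof.
move=> z_loc; have [Cz _] := z_loc; apply: (simplex_on_eq_charvec Cz) => i j iC jC.
pose s := tperm i j; pose w := permvec s z.
have sC k : s k \in C -> k \in C by rewrite /s; case: tpermP => [->|->|//] _.
have Cw : simplex_on C w := simplex_on_permvec sC Cz.
have Fw : F w = F z.
  rewrite /reduced_objective Phi_perm; last exact: simplex_on_simplex Cz.
  by rewrite /sqnorm (sum_permvec (fun r => r ^+ 2)).
have wz : w = z.
  apply/eqP; apply: contraT => wz.
  by have := local_maximizer_reduced_lt z_loc Cw wz; rewrite Fw ltxx.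
by have := congr1 (fun v : 'rV[R]_n => v 0 i) wz; rewrite /= mxE tpermL => <-.
Qed.

Lemma exists_global_maximizer :
  (0 < #|C|)%N -> exists c, global_maximizer f (simplex_on C) c.
Proof.
move=> C0.
have [c Cc c_max] : exists2 c, c \in simplex_on C &
    forall t, t \in simplex_on C -> F t <= F c.
  apply: EVT_max_rV; first by exists (charvec R C); exact: charvec_simplex_on.
    exact: simplex_on_compact.
  apply: continuous_in_subspaceT => x /set_mem /simplex_on_simplex /simplex_X Xx.
  have [cPhi _ _ _ _] := Phi_C2; rewrite continuous_open_subspace // in cPhi.
  exact (continuousB (cPhi x (mem_set Xx)) (@sqnorm_continuous R n x)).
exists c; split; first exact: set_mem Cc.
by move=> y Cy; rewrite !objective_simplex_on ?lerD2l ?c_max ?inE //; exact: set_mem.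
Qed.

End CliqueMaximizers.

Unset Implicit Arguments.
Theorem proposition1 (R : realType) (n : nat) (e : rel 'I_n)
  (X : set 'rV[R]_n) (Phi : 'rV[R]_n -> R) (C : {set 'I_n}) :
  simple_graph e ->
  open X -> simplex (n:=n) `<=` X ->
  C2_on X Phi ->
  (forall x, simplex x -> psd (hessian Phi x)) ->
  (forall x, simplex x -> spec_norm_lt (hessian Phi x) 2) ->
  (forall x, simplex x -> forall s : 'S_n, Phi (permvec s x) = Phi x) ->
  is_clique e C -> (0 < #|C|)%N ->
  let f := fun x : 'rV[R]_n => (x *m adjacency R e *m x^T) 0 0 + Phi x in
  [/\ local_maximizer f (simplex_on C) (charvec R C),
      (forall y, local_maximizer f (simplex_on C) y -> y = charvec R C),
      global_maximizer f (simplex_on C) (charvec R C) &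
      (forall y, global_maximizer f (simplex_on C) y -> y = charvec R C)].
Proof.
move=> e_simple oX simplex_X Phi_C2 _ Phi_spec Phi_perm C_clique C0 f.
have local_charvec :=
  local_maximizer_charvec e_simple C_clique oX simplex_X Phi_C2 Phi_spec Phi_perm.
have [c c_glob] := exists_global_maximizer e_simple C_clique oX simplex_X Phi_C2 C0.
have c_charvec := local_charvec c (global_maximizer_local c_glob).
split.
- by rewrite -c_charvec; exact: global_maximizer_local.
- exact: local_charvec.
- by rewrite -c_charvec.
- by move=> y /global_maximizer_local; exact: local_charvec.
Qed.
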